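(* Let $r\ge2$ and $\alpha,\delta>0$ with $\delta\le\alpha$, $\delta\le 1/(2r)$ and $\alpha<1/(4r(r+1))$. Let $Q$ be an $[r]$-coloured graph on a subset of $[n]$, let $\mathcal{C}$ be a nonempty family of $\delta$-balanced $r$-cuts of $[n]$ each compatible with $Q$, and let $\xi\le1$. Suppose that for every ordered $r$-tuple $S=(S_1,\dots,S_r)$ of pairwise disjoint subsets of $[n]$ that is compatible with $Q$ and satisfies $\min_i|S_i|\ge(1-4r\alpha)n/r$ we are given an event $F(S)$ about a graph $G$ on $[n]$ that is decreasing (closed under deleting edges) and determined by $G\cap\mathrm{ext}(S)$, and satisfies $\Pr(F(S)\mid Q\subseteq G_{n,p})\le\xi$. Let $\mathcal{R}$ be the event that $G_{n,p}$ is $\mathcal{C}$-rigid and its $\mathcal{C}$-core can be labelled $\{S_1,\dots,S_r\}$ with $V^i(Q)\subseteq S_i$ for all $i\in[r]$ such that $F(S_1,\dots,S_r)$ holds. Then $\Pr(\mathcal{R}\mid Q\subseteq G_{n,p})\le r!\cdot\xi$.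
   Context: An $[r]$-coloured graph has vertices coloured from $[r]$ (not necessarily properly); $V^k(Q)$ is the set of vertices of colour $k$. A tuple $(V_1,\dots,V_r)$ of pairwise disjoint sets is compatible with $Q$ if $V^k(Q)\subseteq V_k$ for all $k$. An $r$-cut is an ordered partition of $[n]$ into $r$ parts; it is $\delta$-balanced if each part has size $(1\pm\delta)n/r$; $\mathrm{ext}(S)$ is the set of pairs meeting two distinct $S_i$. $b_{\mathcal{C}}(G)=\max_{\Pi\in\mathcal{C}}|G\cap\mathrm{ext}(\Pi)|$, $\mathrm{maxcut}_{\mathcal{C}}(G)$ is the set of $\Pi\in\mathcal{C}$ attaining it; $x\equiv_{\mathcal{C},G}y$ if $x,y$ lie in the same part of every cut in $\mathrm{maxcut}_{\mathcal{C}}(G)$, and the classes are $(\mathcal{C},G)$-components. $G$ is $\mathcal{C}$-rigid if at least $(1-\alpha)n^2/(2r)$ unordered pairs of distinct vertices are equivalent. For a $\mathcal{C}$-rigid $G$ there are exactly $r$ components of size greater than $(1-4r\alpha)n/r$; this unordered collection is the $\mathcal{C}$-core of $G$. $Q\subseteq G_{n,p}$ means all edges of $Q$ are in $G_{n,p}$. *)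

From HB Require Import structures.
From mathcomp Require Import all_boot all_order all_algebra.
Set Implicit Arguments. Unset Strict Implicit. Unset Printing Implicit Defensive.
Import Order.TTheory GRing.Theory Num.Theory.
Local Open Scope ring_scope.

(* Vertex set [n] = 'I_n, colour set [r] = 'I_r.  A graph on [n] is a set
   of unordered pairs, i.e. a set of 2-element subsets of 'I_n. *)
Definition pairs (n : nat) : {set {set 'I_n}} := [set e : {set 'I_n} | #|e| == 2%N].

Definition rtuple (n r : nat) := {ffun 'I_r -> {set 'I_n}}.

Definition pw_disjoint {n r : nat} (S : rtuple n r) : bool :=
  [forall i, forall j, (i != j) ==> [disjoint S i & S j]].

Definition is_cut {n r : nat} (S : rtuple n r) : bool :=
  pw_disjoint S && (\bigcup_i S i == [set: 'I_n]).

Definition balanced {R : realFieldType} {n r : nat} (delta : R) (S : rtuple n r) : bool :=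
  [forall i, ((1 - delta) * n%:R / r%:R <= (#|S i|)%:R) &&
             ((#|S i|)%:R <= (1 + delta) * n%:R / r%:R)].

Definition ext {n r : nat} (S : rtuple n r) : {set {set 'I_n}} :=
  [set e in pairs n | [exists i, exists j, (i != j) &&
      [exists x in S i, exists y in S j, e == [set x; y]]]].

(* An [r]-coloured graph Q on a subset VQ of [n]: colouring colQ (relevant on
   VQ) and edge set EQ (pairs inside VQ).  V^k(Q) = vertices of colour k. *)
Definition colour_class {n r : nat} (VQ : {set 'I_n}) (colQ : 'I_n -> 'I_r) (k : 'I_r)
  : {set 'I_n} := [set v in VQ | colQ v == k].

Definition compatible {n r : nat} (VQ : {set 'I_n}) (colQ : 'I_n -> 'I_r) (S : rtuple n r)
  : bool := [forall k, colour_class VQ colQ k \subset S k].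

Definition gnp_w {R : realFieldType} {n : nat} (p : R) (G : {set {set 'I_n}}) : R :=
  \prod_(e in pairs n) (if e \in G then p else 1 - p).

Definition Pr {R : realFieldType} (n : nat) (p : R) (A : {set {set 'I_n}} -> bool) : R :=
  \sum_(G : {set {set 'I_n}} | (G \subset pairs n) && A G) gnp_w p G.

Definition condPr {R : realFieldType} (n : nat) (p : R)
  (A B : {set {set 'I_n}} -> bool) : R :=
  @Pr R n p (fun G => A G && B G) / @Pr R n p B.

Definition contains {n : nat} (EQ : {set {set 'I_n}}) (G : {set {set 'I_n}}) : bool :=
  EQ \subset G.

Definition bC {n r : nat} (C : {set rtuple n r}) (G : {set {set 'I_n}}) : nat :=
  \max_(Pi in C) #|G :&: ext Pi|.

Definition maxcut {n r : nat} (C : {set rtuple n r}) (G : {set {set 'I_n}})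
  : {set rtuple n r} := [set Pi in C | #|G :&: ext Pi| == bC C G].

Definition cequiv {n r : nat} (C : {set rtuple n r}) (G : {set {set 'I_n}}) (x y : 'I_n)
  : bool := [forall Pi in maxcut C G, forall i, (x \in Pi i) == (y \in Pi i)].

Definition component {n r : nat} (C : {set rtuple n r}) (G : {set {set 'I_n}}) (x : 'I_n)
  : {set 'I_n} := [set y | cequiv C G x y].

Definition rigid {R : realFieldType} {n r : nat} (alpha : R) (C : {set rtuple n r})
  (G : {set {set 'I_n}}) : bool :=
  (1 - alpha) * (n%:R ^+ 2) / (2 * r%:R) <=
  (#|[set e in pairs n | [forall x in e, forall y in e, cequiv C G x y]]|)%:R.

Definition big_component {R : realFieldType} {n r : nat} (alpha : R)
  (C : {set rtuple n r}) (G : {set {set 'I_n}}) (X : {set 'I_n}) : bool :=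
  [exists x, X == component C G x] &&
  ((1 - 4 * r%:R * alpha) * n%:R / r%:R < (#|X|)%:R).

(* The event R: G is C-rigid and its C-core (the collection of big components)
   can be labelled (S_1,...,S_r) with V^i(Q) subseteq S_i and F(S) holds. *)
Definition eventR {R : realFieldType} {n r : nat} (alpha : R) (C : {set rtuple n r})
  (VQ : {set 'I_n}) (colQ : 'I_n -> 'I_r)
  (F : rtuple n r -> {set {set 'I_n}} -> bool) (G : {set {set 'I_n}}) : bool :=
  rigid alpha C G &&
  [exists S : rtuple n r,
     [&& [forall i, big_component alpha C G (S i)],
         injectiveb S,
         [forall X : {set 'I_n}, big_component alpha C G X ==> [exists i, S i == X]],
         compatible VQ colQ S & F S G]].

(* Conditioned on Q ⊆ G(n,p), the random graph is a product measure on the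
   pairs.  For a tuple S, let A(S) be the event that G is rigid and S labels
   its core compatibly with Q; then R ⊆ ⋃_S (A(S) ∩ F(S)), and since a
   labelling is an injection of [r] onto the r big components, at most r! of
   the A(S) hold at once.  Balancedness keeps two big components out of one
   part of any cut in C, so every maximum cut separates the pairs of ext(S):
   adding such a pair raises b_C by one and leaves the set of maximum cuts,
   hence A(S), unchanged.  Thus A(S) is increasing in the pairs of ext(S),
   while F(S) is decreasing and depends on no other pair, and the
   Harris-Kleitman inequality gives Pr(A(S) ∩ F(S)) ≤ ξ Pr(A(S)).  Summing
   over S yields Pr(R) ≤ ξ E[#{S : A(S)}] ≤ r! ξ. *)

From HB Require Import structures.
From mathcomp Require Import all_boot all_order all_algebra.
From mathcomp Require Import ring lra.
Set Implicit Arguments. Unset Strict Implicit. Unset Printing Implicit Defensive.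
Import Order.TTheory GRing.Theory Num.Theory.
Local Open Scope ring_scope.

Section ProductMeasure.
Variables (U : finType) (R : realFieldType) (q : U -> R).

Definition prod_weight (D G : {set U}) : R :=
  \prod_(e in D) (if e \in G then q e else 1 - q e).

Definition expect (D : {set U}) (f : {set U} -> R) : R :=
  \sum_(G : {set U} | G \subset D) prod_weight D G * f G.

Lemma big_subset_setD1 (D : {set U}) u (h : {set U} -> R) : u \in D ->
  \sum_(G : {set U} | G \subset D) h G =
  \sum_(G : {set U} | G \subset D :\ u) (h G + h (u |: G)).
Proof.
move=> uD; rewrite big_split /= (bigID (fun G : {set U} => u \in G)) /= addrC.
congr (_ + _); first by apply: eq_bigl => G; rewrite subsetD1.
rewrite (reindex_onto (fun G => u |: G) (fun G => G :\ u)); last first.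
  by move=> G /andP [_ uG]; rewrite setD1K.
apply: eq_bigl => G; rewrite setU11 andbT subUset sub1set uD /= subsetD1.
congr (_ && _); case: (boolP (u \in G)) => uG /=; last by rewrite setU1K // eqxx.
apply/negbTE/eqP => E.
by have := setD11 u (u |: G); rewrite E uG.
Qed.

Lemma prod_weight_out (D G : {set U}) u : u \in D -> u \notin G ->
  prod_weight D G = (1 - q u) * prod_weight (D :\ u) G.
Proof.
move=> uD uG; rewrite /prod_weight (bigD1 u) //= (negbTE uG); congr (_ * _).
by apply: eq_bigl => e; rewrite in_setD1 andbC.
Qed.

Lemma prod_weight_in (D G : {set U}) u : u \in D -> u \notin G ->
  prod_weight D (u |: G) = q u * prod_weight (D :\ u) G.
Proof.
move=> uD uG; rewrite /prod_weight (bigD1 u) //= setU11; congr (_ * _).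
rewrite [in RHS](eq_bigl (fun e => (e \in D) && (e != u))); last first.
  by move=> e; rewrite in_setD1 andbC.
by apply: eq_bigr => e /andP [_ eu]; rewrite in_setU1 (negbTE eu).
Qed.

Lemma expect_setD1 (D : {set U}) u (f : {set U} -> R) : u \in D ->
  expect D f = (1 - q u) * expect (D :\ u) f + q u * expect (D :\ u) (fun G => f (u |: G)).
Proof.
move=> uD; rewrite /expect (big_subset_setD1 (fun G => prod_weight D G * f G) uD).
rewrite !mulr_sumr -big_split /=; apply: eq_bigr => G; rewrite subsetD1 => /andP [_ uG].
by rewrite (prod_weight_out uD uG) (prod_weight_in uD uG) !mulrA.
Qed.

Lemma expect_set0 (f : {set U} -> R) : expect set0 f = f set0.
Proof.
rewrite /expect (eq_bigl (fun G => G == set0)); last by move=> G; rewrite subset0.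
by rewrite big_pred1_eq /prod_weight big_set0 mul1r.
Qed.

Lemma eq_expect (D : {set U}) (f g : {set U} -> R) :
  (forall G : {set U}, G \subset D -> f G = g G) -> expect D f = expect D g.
Proof. by move=> fg; apply: eq_bigr => G GD; rewrite fg. Qed.

Lemma expect_sum (D : {set U}) (I : finType) (F : I -> {set U} -> R) :
  expect D (fun G => \sum_i F i G) = \sum_i expect D (F i).
Proof. by rewrite /expect; under eq_bigr do rewrite mulr_sumr; exact: exchange_big. Qed.

Lemma expectZ (D : {set U}) c (f : {set U} -> R) :
  expect D (fun G => c * f G) = c * expect D f.
Proof. by rewrite /expect mulr_sumr; apply: eq_bigr => G _; ring. Qed.

Definition monotone_on (P : pred U) (rel : R -> R -> Prop) (D : {set U})
    (f : {set U} -> R) :=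
  forall v (H : {set U}), v \in D -> P v -> H \subset D -> rel (f (H :\ v)) (f (v |: H)).

Lemma monotone_on_setD1 P rel (D : {set U}) f u :
  monotone_on P rel D f -> monotone_on P rel (D :\ u) f.
Proof.
move=> fP v H /setD1P [_ vD] P_v HD.
by apply: fP => //; apply: subset_trans HD (subD1set D u).
Qed.

Lemma monotone_on_setU1 P rel (D : {set U}) f u : u \in D ->
  monotone_on P rel D f -> monotone_on P rel (D :\ u) (fun G => f (u |: G)).
Proof.
move=> uD fP v H /setD1P [vu vD] P_v HD.
have uHD : u |: H \subset D.
  by rewrite subUset sub1set uD (subset_trans HD (subD1set D u)).
have -> : u |: (H :\ v) = (u |: H) :\ v.
  by apply/setP => z; rewrite !inE; case: (z =P u) => // ->; rewrite eq_sym vu.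
by rewrite setUCA; apply: fP.
Qed.

Hypothesis q01 : forall u, 0 <= q u <= 1.

Lemma prod_weight_ge0 (D G : {set U}) : 0 <= prod_weight D G.
Proof.
apply: prodr_ge0 => e _; have /andP [q0 q1] := q01 e.
by case: ifP; rewrite ?subr_ge0.
Qed.

Lemma ler_expect (D : {set U}) (f g : {set U} -> R) :
  (forall G : {set U}, G \subset D -> f G <= g G) -> expect D f <= expect D g.
Proof. by move=> fg; apply: ler_sum => G GD; rewrite ler_wpM2l ?prod_weight_ge0 ?fg. Qed.

Lemma expect_ge0 (D : {set U}) (f : {set U} -> R) :
  (forall G : {set U}, G \subset D -> 0 <= f G) -> 0 <= expect D f.
Proof. by move=> f0; apply: sumr_ge0 => G GD; rewrite mulr_ge0 ?prod_weight_ge0 ?f0. Qed.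

Lemma expect1 (D : {set U}) : expect D (fun _ => 1) = 1.
Proof.
have [m Dm] := ubnP #|D|; elim: m D Dm => // m IH D Dm.
have [->|[u uD]] := set_0Vmem D; first by rewrite expect_set0.
have D'm : (#|D :\ u| < m)%N by move: Dm; rewrite (cardsD1 u) uD.
by rewrite (expect_setD1 _ uD) !IH //; ring.
Qed.

Lemma expect_cst (D : {set U}) c : expect D (fun _ => c) = c.
Proof. by rewrite -[c in LHS]mulr1 expectZ expect1 mulr1. Qed.

Lemma two_point_covariance (t a0 a1 b0 b1 c0 c1 : R) : 0 <= t <= 1 ->
  (a0 <= a1 /\ b1 <= b0) \/ b1 = b0 -> c0 <= a0 * b0 -> c1 <= a1 * b1 ->
  (1 - t) * c0 + t * c1 <= ((1 - t) * a0 + t * a1) * ((1 - t) * b0 + t * b1).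
Proof.
move=> /andP [t0 t1] [[a01 b10]|->] c0ab c1ab; last by nra.
(* the defect is [t (1 - t) (a1 - a0) (b0 - b1) >= 0] *)
have : 0 <= t * (1 - t) * ((a1 - a0) * (b0 - b1)) by rewrite !mulr_ge0 ?subr_ge0.
nra.
Qed.

Theorem harris_kleitman (X : pred U) (D : {set U}) (f g : {set U} -> R) :
  monotone_on X (fun x y => x <= y) D f -> monotone_on X (fun x y => y <= x) D g ->
  monotone_on (predC X) eq D g ->
  expect D (fun G => f G * g G) <= expect D f * expect D g.
Proof.
have [m Dm] := ubnP #|D|; elim: m D Dm f g => // m IH D Dm f g fX gX gXC.
have [->|[u uD]] := set_0Vmem D; first by rewrite !expect_set0.
have D'm : (#|D :\ u| < m)%N by move: Dm; rewrite (cardsD1 u) uD.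
have IH0 := IH _ D'm f g (monotone_on_setD1 (u := u) fX)
  (monotone_on_setD1 (u := u) gX) (monotone_on_setD1 (u := u) gXC).
have IH1 := IH _ D'm _ _ (monotone_on_setU1 uD fX) (monotone_on_setU1 uD gX)
  (monotone_on_setU1 uD gXC).
have sD : D :\ u \subset D := subD1set D u.
have setD1_id (G : {set U}) : G \subset D :\ u -> G :\ u = G.
  by rewrite subsetD1 => /andP [_ uG]; apply/setDidPl; rewrite disjoint_sym disjoints1.
rewrite !(expect_setD1 _ uD); apply: two_point_covariance IH0 IH1 => //.
case: (boolP (X u)) => Xu; [left; split | right]; apply: ler_expect || apply: eq_expect.
- by move=> G GD; rewrite -{1}(setD1_id G GD); apply: fX; rewrite ?(subset_trans GD sD).
- by move=> G GD; rewrite -{2}(setD1_id G GD); apply: gX; rewrite ?(subset_trans GD sD).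
- by move=> G GD; rewrite -{2}(setD1_id G GD); symmetry; apply: gXC; rewrite ?(subset_trans GD sD).
Qed.

End ProductMeasure.

Section Conditioning.
Variables (R : realFieldType) (n : nat) (p : R) (EQ : {set {set 'I_n}}).
Hypotheses (p_gt0 : 0 < p) (p_le1 : p <= 1) (EQ_pairs : EQ \subset pairs n).

(* Conditioned on [EQ \subset G], the edges of [EQ] are present surely and
   the other pairs independently with probability [p]. *)
Definition cond_edge_prob (e : {set 'I_n}) : R := if e \in EQ then 1 else p.

Lemma cond_edge_prob01 e : 0 <= cond_edge_prob e <= 1.
Proof. by rewrite /cond_edge_prob; case: ifP; rewrite ?ler01 ?lexx ?p_le1 ?ltW. Qed.

Notation expectQ := (expect cond_edge_prob (pairs n)).

Lemma Pr_contains (A : {set {set 'I_n}} -> bool) :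
  Pr p (fun G => A G && contains EQ G) = p ^+ #|EQ| * expectQ (fun G => (A G)%:R).
Proof.
rewrite /Pr /expect mulr_sumr big_mkcondr /=.
apply: eq_bigr => G GD; rewrite /contains.
have [EG|/subsetPn [e eE eG]] := boolP (EQ \subset G); last first.
  rewrite andbF /prod_weight (bigD1 e) /=; last exact: (subsetP EQ_pairs).
  by rewrite (negbTE eG) /cond_edge_prob eE subrr !mul0r mulr0.
suff -> : gnp_w p G = p ^+ #|EQ| * prod_weight cond_edge_prob (pairs n) G.
  by rewrite andbT; case: (A G); rewrite ?mulr1 ?mulr0.
rewrite /gnp_w /prod_weight (bigID (mem EQ)) [in RHS](bigID (mem EQ)) /=.
rewrite [X in _ = _ * (X * _)]big1 ?mul1r; last first.
  by move=> e /andP [_ eE]; rewrite (subsetP EG _ eE) /cond_edge_prob eE.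
congr (_ * _); last first.
  by apply: eq_bigr => e /andP [_ eE]; rewrite /cond_edge_prob (negbTE eE).
rewrite (eq_bigr (fun _ => p)); last by move=> e /andP [_ eE]; rewrite (subsetP EG _ eE).
rewrite -prodr_const; apply: eq_bigl => e.
by apply/andP/idP => [[] //|eE]; rewrite (subsetP EQ_pairs).
Qed.

Lemma condPr_containsE (A : {set {set 'I_n}} -> bool) :
  condPr p A (contains EQ) = expectQ (fun G => (A G)%:R).
Proof.
have PrQ : Pr p (contains EQ) = p ^+ #|EQ|.
  by rewrite -[LHS]/(Pr p (fun G => true && contains EQ G)) Pr_contains
    expect1 ?mulr1 //; exact: cond_edge_prob01.
by rewrite /condPr Pr_contains PrQ mulrC mulKf // expf_neq0 // gt_eqF.
Qed.

End Conditioning.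

Lemma card_setU1I (T : finType) (G E : {set T}) v : v \notin G ->
  #|(v |: G) :&: E| = ((v \in E) + #|G :&: E|)%N.
Proof.
move=> vG; rewrite setIUl; have [vE|vE] := boolP (v \in E).
  by rewrite (setIidPl _) ?sub1set // cardsU1 inE (negbTE vG).
suff -> : [set v] :&: E = set0 by rewrite set0U.
by apply/eqP; rewrite setI_eq0 disjoints1.
Qed.

Section MaxCuts.
Variables (n r : nat) (C : {set rtuple n r}) (G : {set {set 'I_n}}).

Lemma cequiv_maxcut a b (Pi : rtuple n r) k : cequiv C G a b -> Pi \in maxcut C G ->
  (a \in Pi k) = (b \in Pi k).
Proof. by move=> /forallP/(_ Pi) + PiM; rewrite PiM => /forallP/(_ k)/eqP. Qed.

Lemma component_eq x y z : cequiv C G x z -> cequiv C G y z ->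
  component C G x = component C G y.
Proof.
move=> xz yz; apply/setP => w; rewrite !inE.
apply: eq_forallb => Pi; case PiM: (Pi \in maxcut C G) => //=.
by apply: eq_forallb => k; rewrite (cequiv_maxcut k xz PiM) (cequiv_maxcut k yz PiM).
Qed.

Lemma components_disjoint x y : component C G x != component C G y ->
  [disjoint component C G x & component C G y].
Proof.
apply: contraR => /pred0Pn [z /andP]; rewrite !inE => -[xz yz].
by rewrite (component_eq xz yz).
Qed.

Lemma component_sub_maxcut x z (Pi : rtuple n r) k : z \in component C G x -> z \in Pi k ->
  Pi \in maxcut C G -> component C G x \subset Pi k.
Proof.
rewrite inE => xz zk PiM; apply/subsetP => w; rewrite inE => xw.
by rewrite -(cequiv_maxcut k xw PiM) (cequiv_maxcut k xz PiM).
Qed.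

Variable S : rtuple n r.
Hypotheses (S_comp : forall i, exists x, S i = component C G x) (S_inj : injective S).

Lemma pw_disjoint_components : pw_disjoint S.
Proof.
apply/forallP => i; apply/forallP => j; apply/implyP => ij.
have [[x Si] [y Sj]] := (S_comp i, S_comp j).
by rewrite Si Sj components_disjoint // -Si -Sj (inj_eq S_inj).
Qed.

(* A max cut cannot put two of the components [S i] into one part, so it
   separates the endpoints of every pair of [ext S]. *)
Lemma ext_sub_ext_maxcut Pi :
  (forall Pi, Pi \in C -> is_cut Pi) ->
  (forall Pi k i j, Pi \in C -> i != j -> (#|Pi k| < #|S i| + #|S j|)%N) ->
  Pi \in maxcut C G -> ext S \subset ext Pi.
Proof.
move=> C_cut S_big PiM; have PiC : Pi \in C by move: PiM; rewrite inE => /andP [].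
have /andP [_ /eqP cover] := C_cut Pi PiC.
have inPi z : exists k, z \in Pi k.
  have /bigcupP [k _ zk] : z \in \bigcup_k Pi k by rewrite cover inE.
  by exists k.
apply/subsetP => e; rewrite !inE => /andP [ep /existsP [i /existsP [j /andP [ij]]]].
case/existsP => x /andP [xi /existsP [y /andP [yj exy]]].
have [[k xk] [l yl]] := (inPi x, inPi y).
rewrite ep; apply/existsP; exists k; apply/existsP; exists l.
rewrite (introT existsP) ?andbT; last by exists x; rewrite xk; apply/existsP; exists y; rewrite yl.
apply: contraT; rewrite negbK => /eqP kl; rewrite -kl in yl.
have [[x0 Si] [y0 Sj]] := (S_comp i, S_comp j).
have sub_k : S i :|: S j \subset Pi k.
  rewrite subUset Si Sj.
  by rewrite (component_sub_maxcut _ xk) -?Si // (component_sub_maxcut _ yl) -?Sj.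
have := subset_leq_card sub_k; rewrite cardsU.
have /forallP/(_ i)/forallP/(_ j) := pw_disjoint_components.
rewrite ij -setI_eq0 => /eqP ->; rewrite cards0 subn0.
by rewrite leqNgt S_big.
Qed.

End MaxCuts.

Lemma maxcut_setU1 (n r : nat) (C : {set rtuple n r}) (G : {set {set 'I_n}}) v :
  C != set0 -> v \notin G -> (forall Pi, Pi \in maxcut C G -> v \in ext Pi) ->
  maxcut C (v |: G) = maxcut C G.
Proof.
move=> C0 vG vM; have C0' : (0 < #|C|)%N by rewrite card_gt0.
pose cnt (H : {set {set 'I_n}}) (Pi : rtuple n r) := #|H :&: ext Pi|.
have le_bC Pi : Pi \in C -> (cnt G Pi <= bC C G)%N by exact: leq_bigmax_cond.
have [Pi0 Pi0C Pi0max] := eq_bigmax_cond (cnt G) C0'.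
have Pi0M : Pi0 \in maxcut C G by rewrite inE Pi0C /bC Pi0max eqxx.
have bC_v : bC C (v |: G) = (bC C G).+1.
  apply/eqP; rewrite eqn_leq; apply/andP; split.
    apply/bigmax_leqP => Pi PiC; rewrite card_setU1I //.
    by rewrite -addn1 addnC leq_add ?leq_b1 ?le_bC.
  have := leq_bigmax_cond (F := cnt (v |: G)) Pi0 Pi0C.
  by rewrite /cnt card_setU1I // vM // /bC Pi0max.
apply/setP => Pi; rewrite !inE; case PiC: (Pi \in C) => //=.
rewrite bC_v card_setU1I //; case vE: (v \in ext Pi); first by rewrite add1n eqSS.
rewrite add0n; apply/idP/idP => /eqP e; first by have := le_bC Pi PiC; rewrite /cnt e ltnn.
by have := vM Pi; rewrite inE PiC e eqxx vE => /(_ isT).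
Qed.

Section LabelledCore.
Variables (R : realFieldType) (n r : nat) (alpha : R) (C : {set rtuple n r}).
Variables (VQ : {set 'I_n}) (colQ : 'I_n -> 'I_r).

Local Notation threshold := ((1 - 4 * r%:R * alpha) * n%:R / r%:R).

Definition labelled_core (S : rtuple n r) (G : {set {set 'I_n}}) : bool :=
  rigid alpha C G &&
  [&& [forall i, big_component alpha C G (S i)], injectiveb S,
      [forall X : {set 'I_n}, big_component alpha C G X ==> [exists i, S i == X]]
    & compatible VQ colQ S].

Lemma eventR_le_sum_core (F : rtuple n r -> {set {set 'I_n}} -> bool) G :
  (eventR alpha C VQ colQ F G)%:R <=
  \sum_(S : rtuple n r) (labelled_core S G)%:R * (F S G)%:R :> R.
Proof.
have term_ge0 S : 0 <= (labelled_core S G)%:R * (F S G)%:R :> R.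
  by rewrite mulr_ge0 ?ler0n.
case/boolP: (eventR _ _ _ _ _ _) => [|_]; last by apply: sumr_ge0.
case/andP => rig /existsP [S /and5P [S_big S_inj S_all S_comp FS]].
have coreS : labelled_core S G by rewrite /labelled_core rig S_big S_inj S_all S_comp.
by rewrite (bigD1 S) //= coreS FS mulr1 lerDl; apply: sumr_ge0.
Qed.

Lemma labelled_core_maxcut S G1 G0 :
  maxcut C G1 = maxcut C G0 -> labelled_core S G1 = labelled_core S G0.
Proof. by move=> e; rewrite /labelled_core /rigid /big_component /component /cequiv e. Qed.

(* A labelling is an injection from [r] onto the [r] big components. *)
Lemma sum_labelled_core_le G : \sum_(S : rtuple n r) (labelled_core S G)%:R <= (r`!)%:R :> R.
Proof.
rewrite -natr_sum ler_nat (eq_bigr (fun S => if labelled_core S G then 1 else 0)%N);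
  last by move=> S _; case: labelled_core.
rewrite -big_mkcond sum1_card /=.
case: (pickP (labelled_core ^~ G)) => [S0 coreS0|no_core]; last by rewrite eq_card0.
set K := [set X | big_component alpha C G X].
have /and5P [_ S0_big /injectiveP S0_inj S0_all _] := coreS0.
have K_img : K = S0 @: [set: 'I_r].
  apply/setP => X; rewrite inE; apply/idP/imsetP => [/(implyP (forallP S0_all X))|[i _ ->]].
    by case/existsP => i /eqP <-; exists i.
  exact: (forallP S0_big).
have cardK : #|K| = r by rewrite K_img card_imset // cardsT card_ord.
apply: (@leq_trans #|[set f : rtuple n r in ffun_on K | injectiveb f]|).
  apply/subset_leq_card/subsetP => S; rewrite !inE => /and5P [_ S_big -> _ _].
  by rewrite andbT; apply/ffun_onP => i; rewrite inE (forallP S_big).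
by rewrite card_inj_ffuns_on card_ord cardK ffactnn.
Qed.

Lemma labelled_core_components S G : labelled_core S G ->
  (forall i, exists x, S i = component C G x) /\ injective S.
Proof.
case/and5P=> _ /forallP S_big /injectiveP S_inj _ _; split=> // i.
by have /andP [/existsP [x /eqP Si] _] := S_big i; exists x.
Qed.

Lemma labelled_core_large S G : labelled_core S G ->
  [/\ pw_disjoint S, compatible VQ colQ S & forall i, threshold <= (#|S i|)%:R].
Proof.
move=> coreS; have [S_comp S_inj] := labelled_core_components coreS.
case/and5P: coreS => _ /forallP S_big _ _ S_compat; split=> //.
  exact: pw_disjoint_components.
by move=> i; have /andP [_ /ltW] := S_big i.
Qed.

Hypotheses (C_nonempty : C != set0) (C_cut : forall Pi, Pi \in C -> is_cut Pi).
Hypothesis C_parts : forall Pi k, Pi \in C -> (#|Pi k|)%:R <= 2 * threshold.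

Lemma labelled_core_increasing S :
  monotone_on (mem (ext S)) (fun x y : R => x <= y) (pairs n)
    (fun G => (labelled_core S G)%:R).
Proof.
move=> v H _ vS _; case coreS: (labelled_core S (H :\ v)); last by rewrite ler0n.
have [S_comp S_inj] := labelled_core_components coreS.
have S_big i : threshold < (#|S i|)%:R.
  by case/and5P: coreS => _ /forallP/(_ i)/andP [].
have parts_small Pi k i j : Pi \in C -> i != j -> (#|Pi k| < #|S i| + #|S j|)%N.
  move=> PiC _; rewrite -(ltr_nat R) natrD.
  by apply: le_lt_trans (C_parts k PiC) _; rewrite mulr2n mulrDl mul1r ltrD.
have vM Pi : Pi \in maxcut C (H :\ v) -> v \in ext Pi.
  by move=> PiM; apply: subsetP vS; exact: ext_sub_ext_maxcut PiM.
have vH : v \notin H :\ v by rewrite setD11.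
have -> : v |: H = v |: (H :\ v) by apply/setP => z; rewrite !inE; case: eqP.
by rewrite (labelled_core_maxcut S (maxcut_setU1 C_nonempty vH vM)) coreS.
Qed.

Lemma expect_core_mul_le (q : {set 'I_n} -> R) (S : rtuple n r) (g : {set {set 'I_n}} -> bool) :
  (forall e, 0 <= q e <= 1) ->
  (forall G G' : {set {set 'I_n}}, G \subset pairs n -> G' \subset G -> g G -> g G') ->
  (forall G G' : {set {set 'I_n}}, G \subset pairs n -> G' \subset pairs n ->
     G :&: ext S = G' :&: ext S -> g G = g G') ->
  expect q (pairs n) (fun G => (labelled_core S G)%:R * (g G)%:R) <=
  expect q (pairs n) (fun G => (labelled_core S G)%:R) * expect q (pairs n) (fun G => (g G)%:R).
Proof.
move=> q01 g_decr g_ext; apply: (harris_kleitman q01 (labelled_core_increasing (S := S))) => //.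
- move=> v H vD _ HD; case gH: (g (v |: H)); last by rewrite ler0n.
  rewrite (g_decr (v |: H) (H :\ v)) ?subUset ?sub1set ?vD ?HD //.
  by apply/subsetP => z /setD1P [_ zH]; rewrite setU1r.
- move=> v H vD vS HD; rewrite (g_ext (v |: H) (H :\ v)) ?subUset ?sub1set ?vD ?HD //.
    exact: subset_trans (subD1set H v) HD.
  apply/setP => z; rewrite !in_setI in_setU1 in_setD1.
  by case: (z =P v) => [->|] //=; rewrite (negPf (vS : v \notin ext S)).
Qed.

Variables (q : {set 'I_n} -> R) (F : rtuple n r -> {set {set 'I_n}} -> bool) (xi : R).
Hypotheses (q01 : forall e, 0 <= q e <= 1) (xi_ge0 : 0 <= xi).
Hypothesis F_ok : forall S : rtuple n r,
  pw_disjoint S -> compatible VQ colQ S -> (forall i, threshold <= (#|S i|)%:R) ->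
  [/\ forall G G' : {set {set 'I_n}}, G \subset pairs n -> G' \subset G -> F S G -> F S G',
      forall G G' : {set {set 'I_n}}, G \subset pairs n -> G' \subset pairs n ->
        G :&: ext S = G' :&: ext S -> F S G = F S G'
    & expect q (pairs n) (fun G => (F S G)%:R) <= xi].

Lemma expect_core_F_le S :
  expect q (pairs n) (fun G => (labelled_core S G)%:R * (F S G)%:R) <=
  xi * expect q (pairs n) (fun G => (labelled_core S G)%:R).
Proof.
case: (pickP (labelled_core S)) => [G0 core0|no_core]; last first.
  by rewrite !(@eq_expect _ _ _ _ _ (fun _ => 0)) ?expect_cst ?mulr0 // => G _;
    rewrite no_core ?mul0r.
have [S_disj S_compat S_large] := labelled_core_large core0.
have [F_decr F_ext F_xi] := F_ok S_disj S_compat S_large.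
apply: le_trans (expect_core_mul_le q01 F_decr F_ext) _.
by rewrite mulrC ler_wpM2r // expect_ge0 // => G _; rewrite ler0n.
Qed.

Lemma expect_eventR_le :
  expect q (pairs n) (fun G => (eventR alpha C VQ colQ F G)%:R) <= (r`!)%:R * xi.
Proof.
apply: le_trans (ler_expect q01 (fun G _ => eventR_le_sum_core F G)) _.
rewrite expect_sum /=; apply: le_trans (ler_sum _ (fun S _ => expect_core_F_le S)) _.
rewrite -mulr_sumr -expect_sum mulrC ler_wpM2r //.
apply: le_trans (ler_expect q01 (fun G _ => sum_labelled_core_le G)) _.
by rewrite expect_cst.
Qed.

End LabelledCore.

Lemma core_threshold_bounds (R : realFieldType) (r : nat) (alpha delta : R) :
  (2 <= r)%N -> 0 <= delta -> delta <= alpha -> delta <= 1 / (2 * r%:R) ->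
  alpha < 1 / (4 * r%:R * (r%:R + 1)) ->
  1 + delta <= 2 * (1 - 4 * r%:R * alpha) /\ 1 - 4 * r%:R * alpha <= 1 - delta.
Proof.
move=> r2 d0 da; have r_ge2 : 2 <= r%:R :> R by rewrite (ler_nat R 2).
rewrite ler_pdivlMr ?ltr_pdivlMr ?mulr_gt0 //; try lra.
move=> dr ar; have : 0 <= (r%:R - 2) * (r%:R * alpha) by rewrite mulr_ge0 ?subr_ge0; nra.
have : 0 <= (r%:R - 2) * delta by rewrite mulr_ge0 ?subr_ge0.
split; nra.
Qed.

Theorem mainTheorem17 (R : realFieldType) (n r : nat) (alpha delta p xi : R)
  (VQ : {set 'I_n}) (colQ : 'I_n -> 'I_r) (EQ : {set {set 'I_n}})
  (C : {set rtuple n r}) (F : rtuple n r -> {set {set 'I_n}} -> bool) :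
  (2 <= r)%N ->
  0 < alpha -> 0 < delta -> delta <= alpha -> delta <= 1 / (2 * r%:R) ->
  alpha < 1 / (4 * r%:R * (r%:R + 1)) ->
  0 < p -> p <= 1 ->
  EQ \subset pairs n -> (forall e, e \in EQ -> e \subset VQ) ->
  C != set0 ->
  (forall Pi, Pi \in C -> [&& is_cut Pi, balanced delta Pi & compatible VQ colQ Pi]) ->
  xi <= 1 ->
  (forall S : rtuple n r,
     pw_disjoint S -> compatible VQ colQ S ->
     (forall i, (1 - 4 * r%:R * alpha) * n%:R / r%:R <= (#|S i|)%:R) ->
     [/\ (forall G G' : {set {set 'I_n}}, G \subset pairs n -> G' \subset G ->
            F S G -> F S G'),
         (forall G G' : {set {set 'I_n}}, G \subset pairs n -> G' \subset pairs n ->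
            G :&: ext S = G' :&: ext S -> F S G = F S G') &
         @condPr R n p (F S) (contains EQ) <= xi]) ->
  @condPr R n p (eventR alpha C VQ colQ F) (contains EQ) <= (r`!)%:R * xi.
Proof.
move=> r2 _ d0 da dr ar p0 p1 EQ_pairs _ C0 C_ok _ F_ok.
set t := (1 - 4 * r%:R * alpha) * n%:R / r%:R.
have q01 := cond_edge_prob01 EQ p0 p1.
have scale a b : a <= b -> a * n%:R / r%:R <= b * n%:R / r%:R.
  by move=> ab; rewrite -!mulrA ler_wpM2r // divr_ge0.
have [up low] := core_threshold_bounds r2 (ltW d0) da dr ar.
have C_cut Pi : Pi \in C -> is_cut Pi by case/C_ok/and3P.
have C_parts Pi k : Pi \in C -> (#|Pi k|)%:R <= 2 * t.
  case/C_ok/and3P => _ /forallP/(_ k)/andP [_ hi] _; apply: le_trans hi _.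
  by rewrite /t !mulrA; apply: scale.
have xi0 : 0 <= xi.
  have /set0Pn [Pi /C_ok/and3P [/andP [Pi_disj _] /forallP Pi_bal Pi_compat]] := C0.
  have Pi_large i : t <= (#|Pi i|)%:R.
    by have /andP [lo _] := Pi_bal i; apply: le_trans lo; apply: scale.
  have [_ _] := F_ok Pi Pi_disj Pi_compat Pi_large; apply: le_trans.
  by rewrite condPr_containsE // expect_ge0 // => G _; rewrite ler0n.
rewrite condPr_containsE //; apply: expect_eventR_le => // S S_disj S_compat S_large.
by rewrite -condPr_containsE //; apply: F_ok.
Qed.
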